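(* For every formula $A$: $A$ is a theorem of the provability logic $\mathsf{GL}$ if and only if the one-element sequent $A$ is cut-free provable in the nested sequent calculus (rules (id), ($\land$), ($\lor$), ($\Box$), ($\Diamond$)).
   Context: $\mathsf{GL}$ is the normal modal logic obtained from $\mathsf{K}$ by adding the Löb axiom $\Box(\Box A\to A)\to\Box A$; a formula of the language below is read in $\mathsf{GL}$ by interpreting $\alpha^\perp$ as $\neg\alpha$ and $\Diamond$ as $\neg\Box\neg$. Fix a countable set of atoms; each atom $\alpha$ has a dual negative atom $\alpha^\perp$. Formulas: $A,B ::= \alpha \mid \alpha^\perp \mid A\land B \mid A\lor B \mid \Box A \mid \Diamond A$. Negation $A^\perp$ is defined by $(\alpha)^\perp=\alpha^\perp$, $(\alpha^\perp)^\perp=\alpha$, $(A\land B)^\perp=A^\perp\lor B^\perp$, $(A\lor B)^\perp=A^\perp\land B^\perp$, $(\Box A)^\perp=\Diamond A^\perp$, $(\Diamond A)^\perp=\Box A^\perp$. A (nested) sequent is given by $\Gamma,\Delta ::= \cdot \mid \Gamma, A \mid \Gamma, [\Delta]$, where $\cdot$ is the empty sequent; sequents are taken up to exchange (finite multisets of formulas and bracketed sequents), and $\Gamma,\Delta$ denotes juxtaposition. A unary context is given by $\Gamma\{-\} ::= \Delta,\{-\} \mid \Delta,[\Gamma\{-\}]$ (a sequent with exactly one hole); $\Gamma\{\Delta\}$ is the result of filling the hole with $\Delta$, and $\Gamma\{\}$ means $\Gamma\{\cdot\}$. Depth: $\mathrm{depth}(\Delta,\{-\})=0$, $\mathrm{depth}(\Delta,[\Gamma\{-\}])=\mathrm{depth}(\Gamma\{-\})+1$.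 Rules: (id) $\Gamma\{\alpha^\perp,\alpha\}$ with no premises ($\alpha$ an atom); ($\land$) from $\Gamma\{A\}$ and $\Gamma\{B\}$ infer $\Gamma\{A\land B\}$; ($\lor$) from $\Gamma\{A,B\}$ infer $\Gamma\{A\lor B\}$; ($\Box$) from $\Gamma\{[\Diamond A^\perp, A]\}$ infer $\Gamma\{\Box A\}$; ($\Diamond$) from $\Gamma\{\Delta\{A\},\Diamond A\}$ infer $\Gamma\{\Delta\{\},\Diamond A\}$, provided $\mathrm{depth}(\Delta\{-\})>0$; (cut) from $\Gamma\{A\}$ and $\Gamma\{A^\perp\}$ infer $\Gamma\{\}$. ''Cut-free provable'' means derivable using (id), ($\land$), ($\lor$), ($\Box$), ($\Diamond$) only. *)

From Stdlib Require Import List Permutation.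
Import ListNotations.

(* Atoms are natural numbers; [Pos a] is the atom a, [Neg a] its dual a^perp. *)
Inductive form : Type :=
| Pos : nat -> form
| Neg : nat -> form
| And : form -> form -> form
| Or  : form -> form -> form
| Box : form -> form
| Dia : form -> form.

Fixpoint neg (A : form) : form :=
  match A with
  | Pos a => Neg a
  | Neg a => Pos a
  | And A B => Or (neg A) (neg B)
  | Or A B => And (neg A) (neg B)
  | Box A => Dia (neg A)
  | Dia A => Box (neg A)
  end.

(* Full modal language used for the Hilbert-style presentation of GL. *)
Inductive mform : Type :=
| MVar : nat -> mform
| MBot : mform
| MImp : mform -> mform -> mform
| MAnd : mform -> mform -> mform
| MOr  : mform -> mform -> mform
| MBox : mform -> mform.

Definition MNeg (A : mform) : mform := MImp A MBot.
Definition MDia (A : mform) : mform := MNeg (MBox (MNeg A)).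

Fixpoint beval (f : mform -> bool) (A : mform) : bool :=
  match A with
  | MVar n => f (MVar n)
  | MBot => false
  | MImp A B => implb (beval f A) (beval f B)
  | MAnd A B => andb (beval f A) (beval f B)
  | MOr A B => orb (beval f A) (beval f B)
  | MBox A => f (MBox A)
  end.

(* Propositional tautologies (instances of classical tautologies). *)
Definition tautology (A : mform) : Prop := forall f, beval f A = true.

Inductive GLthm : mform -> Prop :=
| GL_taut : forall A, tautology A -> GLthm A
| GL_K : forall A B, GLthm (MImp (MBox (MImp A B)) (MImp (MBox A) (MBox B)))
| GL_Loeb : forall A, GLthm (MImp (MBox (MImp (MBox A) A)) (MBox A))
| GL_MP : forall A B, GLthm (MImp A B) -> GLthm A -> GLthm B
| GL_Nec : forall A, GLthm A -> GLthm (MBox A).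

Fixpoint tr (A : form) : mform :=
  match A with
  | Pos a => MVar a
  | Neg a => MNeg (MVar a)
  | And A B => MAnd (tr A) (tr B)
  | Or A B => MOr (tr A) (tr B)
  | Box A => MBox (tr A)
  | Dia A => MDia (tr A)
  end.

(* A sequent is a list of items (formulas and bracketed sequents); lists are
   taken up to exchange via the exchange rule below. *)
Inductive item : Type :=
| IF : form -> item
| IB : list item -> item.

Definition sequent := list item.

(* Unary contexts: Delta,{-}  |  Delta,[Gamma{-}] *)
Inductive ctx : Type :=
| Hole : sequent -> ctx
| Under : sequent -> ctx -> ctx.

Fixpoint fill (C : ctx) (G : sequent) : sequent :=
  match C with
  | Hole D => D ++ G
  | Under D C' => D ++ [IB (fill C' G)]
  end.

Fixpoint depth (C : ctx) : nat :=
  match C with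
  | Hole _ => 0
  | Under _ C' => S (depth C')
  end.

Inductive provable : sequent -> Prop :=
| r_exch : forall C S S', Permutation S S' ->
    provable (fill C S) -> provable (fill C S')
| r_id : forall C a, provable (fill C [IF (Neg a); IF (Pos a)])
| r_and : forall C A B, provable (fill C [IF A]) -> provable (fill C [IF B]) ->
    provable (fill C [IF (And A B)])
| r_or : forall C A B, provable (fill C [IF A; IF B]) ->
    provable (fill C [IF (Or A B)])
| r_box : forall C A, provable (fill C [IB [IF (Dia (neg A)); IF A]]) ->
    provable (fill C [IF (Box A)])
| r_dia : forall G D A, 0 < depth D ->
    provable (fill G (fill D [IF A] ++ [IF (Dia A)])) ->
    provable (fill G (fill D [] ++ [IF (Dia A)])).

From Stdlib Require Import List Permutation Arith Lia Bool Classical ClassicalEpsilon.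
Import ListNotations.

(* Soundness: read a nested sequent as the disjunction of its formulas, a bracket [Δ]
   as [Box] of the reading of [Δ].  Every rule is then valid in GL: the box rule is an
   instance of Löb's axiom, and the diamond rule uses axiom 4, which is derivable in GL.

   Completeness: if [A] is not provable, backward proof search builds a nested sequent
   containing [A] that is saturated (closed under the invertible rules, with [X] copied
   into every bracket below a [Dia X]) and clash-free.  Its nested brackets, ordered by
   nesting, form a transitive and conversely well-founded Kripke frame, i.e. a GL frame;
   making an atom true exactly where its negation occurs, every formula of a saturated
   sequent is false in it, so [A] is not a theorem of GL.  The search terminates because
   all formulas stay in the closure of [A] under subformulas and negation, and a bracket
   [Dia ~B, B] for [Box B] is opened only when [~B] is not yet inherited from above
   (otherwise the sequent is provable), so the inherited [~B] grow along every branch. *)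

(** * Soundness *)

Fixpoint tr_item (i : item) : mform :=
  match i with
  | IF A => tr A
  | IB D => MBox (fold_right MOr MBot (map tr_item D))
  end.

Definition tr_seq (S : sequent) : mform := fold_right MOr MBot (map tr_item S).

Lemma tr_item_IF A : tr_item (IF A) = tr A.
Proof. reflexivity. Qed.

Lemma tr_item_IB D : tr_item (IB D) = MBox (tr_seq D).
Proof. reflexivity. Qed.

Lemma beval_tr_seq_app f S S' :
  beval f (tr_seq (S ++ S')) = beval f (tr_seq S) || beval f (tr_seq S').
Proof.
  induction S as [|i S IH]; [reflexivity|].
  cbn [app]; unfold tr_seq in *; cbn [map fold_right beval].
  rewrite IH, orb_assoc; reflexivity.
Qed.

Lemma beval_tr_seq_perm f S S' :
  Permutation S S' -> beval f (tr_seq S) = beval f (tr_seq S').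
Proof.
  unfold tr_seq; induction 1; cbn [map fold_right beval]; try congruence.
  rewrite !orb_assoc, (orb_comm (beval f (tr_item y))); reflexivity.
Qed.

Ltac tsimp :=
  repeat (rewrite ?beval_tr_seq_app, ?tr_item_IF, ?tr_item_IB in *;
          cbn [beval tr_seq tr neg MNeg MDia map fold_right implb andb orb negb app] in *).
Ltac bool_cases f :=
  repeat match goal with
  | |- context [beval f ?X] => destruct (beval f X)
  | |- context [f ?X] => destruct (f X)
  end.
(* [taut] proves propositional tautologies, treating boxed formulas and the reading of
   unknown sequents as propositional letters. *)
Ltac taut := try apply GL_taut; let f := fresh "f" in intro f; tsimp; bool_cases f; reflexivity.

Lemma GL_mp_taut A B : GLthm A -> tautology (MImp A B) -> GLthm B.
Proof. intros. eapply GL_MP; [apply GL_taut|]; eauto. Qed.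

Lemma GL_mp2_taut A1 A2 B :
  GLthm A1 -> GLthm A2 -> tautology (MImp A1 (MImp A2 B)) -> GLthm B.
Proof. intros HA1 HA2 T. eapply GL_MP; [eapply GL_mp_taut; [exact HA1 | exact T] | exact HA2]. Qed.

Lemma GL_box_mono A B : GLthm (MImp A B) -> GLthm (MImp (MBox A) (MBox B)).
Proof. intro H. eapply GL_MP; [apply GL_K | apply GL_Nec, H]. Qed.

Lemma GL_box_mono2 A B C :
  GLthm (MImp A (MImp B C)) -> GLthm (MImp (MBox A) (MImp (MBox B) (MBox C))).
Proof.
  intro H. eapply GL_mp2_taut; [apply GL_box_mono, H | apply (GL_K B C) |]. taut.
Qed.

(* Axiom 4 is derivable in GL: apply Loeb to [A /\ Box A]. *)
Lemma GL_four A : GLthm (MImp (MBox A) (MBox (MAnd A (MBox A)))).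
Proof.
  set (B := MAnd A (MBox A)).
  assert (HBA : GLthm (MImp (MBox B) (MBox A))) by (apply GL_box_mono; unfold B; taut).
  assert (HAB : GLthm (MImp A (MImp (MBox B) B)))
    by (eapply GL_mp_taut; [exact HBA|]; unfold B; taut).
  eapply GL_mp2_taut; [apply GL_box_mono, HAB | apply (GL_Loeb B) |]. taut.
Qed.

Lemma tr_neg A : GLthm (MImp (tr (neg A)) (MNeg (tr A))).
Proof.
  induction A as [a|a|A IHA B IHB|A IHA B IHB|A IHA|A IHA]; cbn [neg tr].
  1, 2: taut.
  1, 2: eapply GL_mp2_taut; [exact IHA | exact IHB | taut].
  - assert (H : GLthm (MImp (MBox (tr A)) (MBox (MNeg (tr (neg A))))))
      by (apply GL_box_mono; eapply GL_mp_taut; [exact IHA | taut]).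
    eapply GL_mp_taut; [exact H | taut].
  - eapply GL_mp_taut; [apply GL_box_mono, IHA | taut].
Qed.

Lemma tr_seq_fill_mono C S S' :
  GLthm (MImp (tr_seq S) (tr_seq S')) ->
  GLthm (MImp (tr_seq (fill C S)) (tr_seq (fill C S'))).
Proof.
  induction C as [D|D C IH]; cbn [fill]; intro H.
  - eapply GL_mp_taut; [exact H | taut].
  - eapply GL_mp_taut; [apply GL_box_mono, IH, H | taut].
Qed.

Lemma tr_seq_fill_mono2 C S1 S2 S :
  GLthm (MImp (tr_seq S1) (MImp (tr_seq S2) (tr_seq S))) ->
  GLthm (MImp (tr_seq (fill C S1)) (MImp (tr_seq (fill C S2)) (tr_seq (fill C S)))).
Proof.
  induction C as [D|D C IH]; cbn [fill]; intro H.
  - eapply GL_mp_taut; [exact H | taut].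
  - eapply GL_mp_taut; [apply GL_box_mono2, IH, H | taut].
Qed.

Lemma tr_seq_fill_nec C S : GLthm (tr_seq S) -> GLthm (tr_seq (fill C S)).
Proof.
  induction C as [D|D C IH]; cbn [fill]; intro H.
  - eapply GL_mp_taut; [exact H | taut].
  - eapply GL_mp_taut; [apply GL_Nec, IH, H | taut].
Qed.

(* [~A /\ Box ~A] is inherited by every deeper node (axiom 4), so there [A] may be dropped. *)
Lemma tr_seq_fill_drop A D :
  GLthm (MImp (MAnd (MNeg (tr A)) (MBox (MNeg (tr A))))
              (MImp (tr_seq (fill D [IF A])) (tr_seq (fill D [])))).
Proof.
  induction D as [E|E D IH]; cbn [fill]; [taut|].
  eapply GL_mp2_taut; [apply GL_box_mono2, IH | apply (GL_four (MNeg (tr A))) | taut].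
Qed.

Theorem provable_sound S : provable S -> GLthm (tr_seq S).
Proof.
  induction 1 as [C S S' HP _ IH|C a|C A B _ IHA _ IHB|C A B _ IH|C A _ IH|G D A HD _ IH].
  - eapply GL_MP; [apply tr_seq_fill_mono | exact IH].
    apply GL_taut; intro f; cbn [beval]. rewrite (beval_tr_seq_perm f _ _ HP).
    destruct (beval f (tr_seq S')); reflexivity.
  - apply tr_seq_fill_nec. taut.
  - eapply GL_MP; [eapply GL_MP; [apply tr_seq_fill_mono2 | exact IHA] | exact IHB]. taut.
  - eapply GL_MP; [apply tr_seq_fill_mono | exact IH]. taut.
  - eapply GL_MP; [apply tr_seq_fill_mono | exact IH].
    assert (H : GLthm (MImp (MBox (tr A)) (MBox (MNeg (tr (neg A))))))
      by (apply GL_box_mono; eapply GL_mp_taut; [apply (tr_neg A) | taut]).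
    assert (HLoeb : GLthm (MImp (tr_seq [IF (Dia (neg A)); IF A]) (MImp (MBox (tr A)) (tr A))))
      by (eapply GL_mp_taut; [exact H | taut]).
    eapply GL_mp2_taut; [apply GL_box_mono, HLoeb | apply (GL_Loeb (tr A)) | taut].
  - eapply GL_MP; [apply tr_seq_fill_mono | exact IH].
    destruct D as [E|E D]; cbn in HD; [lia|]. cbn [fill].
    eapply GL_mp2_taut;
      [apply GL_box_mono2, (tr_seq_fill_drop A D) | apply (GL_four (MNeg (tr A))) | taut].
Qed.

(** * The countermodel *)

(* Accessibility in the countermodel, whose worlds are nested sequents. *)
Inductive reach : sequent -> sequent -> Prop :=
| reach_child w v : In (IB v) w -> reach w v
| reach_nested w u v : In (IB u) w -> reach u v -> reach w v.

Fixpoint item_size (i : item) : nat :=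
  match i with IF _ => 1 | IB D => S (list_sum (map item_size D)) end.
Definition seq_size (S : sequent) : nat := list_sum (map item_size S).

Lemma item_size_le i S : In i S -> item_size i <= seq_size S.
Proof.
  unfold seq_size, list_sum; induction S as [|j S IH]; cbn; [tauto|].
  intros [<-|H]; [lia|]. specialize (IH H); lia.
Qed.

Lemma reach_size w v : reach w v -> seq_size v < seq_size w.
Proof.
  induction 1 as [w v H|w u v H _ IH]; apply item_size_le in H; cbn in H; unfold seq_size in *; lia.
Qed.

Lemma reach_trans w u v : reach w u -> reach u v -> reach w v.
Proof. induction 1; eauto using reach. Qed.

(* An atom holds at [w] iff its negation occurs in [w], so that the formulas
   of a saturated sequent come out false. *)
Fixpoint forces (w : sequent) (A : mform) : Prop :=
  match A with
  | MVar n => In (IF (Neg n)) w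
  | MBot => False
  | MImp A B => forces w A -> forces w B
  | MAnd A B => forces w A /\ forces w B
  | MOr A B => forces w A \/ forces w B
  | MBox A => forall v, reach w v -> forces v A
  end.

Lemma forces_tautology w A : tautology A -> forces w A.
Proof.
  intro HA. set (f := fun X => if excluded_middle_informative (forces w X) then true else false).
  enough (E : forall B, beval f B = true <-> forces w B) by apply E, HA.
  induction B as [n| |B1 IH1 B2 IH2|B1 IH1 B2 IH2|B1 IH1 B2 IH2|B]; cbn.
  1, 6: unfold f; destruct excluded_middle_informative; split; easy.
  1: split; easy.
  all: destruct (beval f B1), (beval f B2); cbn; intuition congruence.
Qed.

Theorem GL_valid A : GLthm A -> forall w, forces w A.
Proof.
  induction 1 as [A HA|A B|A|A B _ IHAB _ IHA|A _ IH]; intro w; cbn in *.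
  - apply forces_tautology, HA.
  - eauto.
  - intros HL v. remember (seq_size v) as n eqn:En. revert v En.
    induction n as [n IHn] using lt_wf_ind; intros v En Hv.
    apply HL; [exact Hv|]. intros u Hu.
    apply (IHn (seq_size u));
      [subst; apply reach_size, Hu | reflexivity | eapply reach_trans; eauto].
  - apply IHAB, IHA.
  - auto.
Qed.

Definition ctx_prepend (L : sequent) (C : ctx) : ctx :=
  match C with Hole E => Hole (L ++ E) | Under E C' => Under (L ++ E) C' end.

Fixpoint ctx_comp (C C' : ctx) : ctx :=
  match C with Hole L => ctx_prepend L C' | Under L C0 => Under L (ctx_comp C0 C') end.

Lemma fill_ctx_comp C C' S : fill (ctx_comp C C') S = fill C (fill C' S).
Proof.
  induction C as [L|L C IH]; cbn; [|now rewrite IH].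
  destruct C'; cbn; now rewrite app_assoc.
Qed.

Lemma fill_app C L S : fill C (L ++ S) = fill (ctx_comp C (Hole L)) S.
Proof. now rewrite fill_ctx_comp. Qed.

Definition bracket_ctx (C : ctx) (L : sequent) : ctx := ctx_comp C (Under L (Hole [])).

Lemma fill_bracket C L S : fill C (L ++ [IB S]) = fill (bracket_ctx C L) S.
Proof. unfold bracket_ctx. now rewrite fill_ctx_comp. Qed.

Lemma provable_exch C S S' : Permutation S S' -> provable (fill C S') -> provable (fill C S).
Proof. intros HP H. eapply r_exch; [apply Permutation_sym, HP | exact H]. Qed.

(* A normalizing solver for [Permutation] goals between explicit concatenations. *)
Lemma perm_app_mid {T} (L A B1 B2 : list T) :
  Permutation A (B1 ++ B2) -> Permutation (L ++ A) (B1 ++ L ++ B2).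
Proof.
  intro H. rewrite (app_assoc B1), (Permutation_app_comm B1), <- app_assoc.
  apply Permutation_app_head, H.
Qed.

Ltac find_elt T x B k :=
  lazymatch B with
  | x :: ?R => k (@nil T) R
  | ?y :: ?R => find_elt T x R ltac:(fun B1 B2 => k (y :: B1) B2)
  | ?M ++ ?R => find_elt T x R ltac:(fun B1 B2 => k (M ++ B1) B2)
  end.
Ltac find_sub T L B k :=
  lazymatch B with
  | L ++ ?R => k (@nil T) R
  | L => k (@nil T) (@nil T)
  | ?y :: ?R => find_sub T L R ltac:(fun B1 B2 => k (y :: B1) B2)
  | ?M ++ ?R => find_sub T L R ltac:(fun B1 B2 => k (M ++ B1) B2)
  end.
Ltac app_norm :=
  repeat (rewrite <- app_assoc || rewrite <- app_comm_cons
          || rewrite app_nil_l || rewrite app_nil_r).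
Ltac perm_eq := app_norm; reflexivity.
Ltac psolve :=
  app_norm;
  lazymatch goal with
  | |- Permutation [] _ => reflexivity
  | |- @Permutation ?T (?x :: ?A) ?B =>
      find_elt T x B ltac:(fun B1 B2 =>
        apply (@perm_trans _ _ (B1 ++ x :: B2)); [apply Permutation_cons_app; psolve | perm_eq])
  | |- @Permutation ?T (?L ++ ?A) ?B =>
      find_sub T L B ltac:(fun B1 B2 =>
        apply (@perm_trans _ _ (B1 ++ L ++ B2)); [apply perm_app_mid; psolve | perm_eq])
  | |- @Permutation ?T ?L ?B =>
      find_sub T L B ltac:(fun B1 B2 =>
        apply (@perm_trans _ _ (B1 ++ L ++ B2));
        [rewrite <- (app_nil_r L) at 1; apply perm_app_mid; psolve | perm_eq])
  end.
Ltac exch_to S := apply (provable_exch _ _ S); [psolve|].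

Lemma provable_id_end C L a : provable (fill C (L ++ [IF (Neg a); IF (Pos a)])).
Proof. rewrite fill_app. apply r_id. Qed.

Lemma provable_and_end C L A B :
  provable (fill C (L ++ [IF A])) -> provable (fill C (L ++ [IF B])) ->
  provable (fill C (L ++ [IF (And A B)])).
Proof. rewrite !fill_app. apply r_and. Qed.

Lemma provable_or_end C L A B :
  provable (fill C (L ++ [IF A; IF B])) -> provable (fill C (L ++ [IF (Or A B)])).
Proof. rewrite !fill_app. apply r_or. Qed.

Lemma provable_box_end C L A :
  provable (fill C (L ++ [IB [IF (Dia (neg A)); IF A]])) -> provable (fill C (L ++ [IF (Box A)])).
Proof. rewrite !fill_app. apply r_box. Qed.

Lemma neg_involutive A : neg (neg A) = A.
Proof. induction A; cbn; congruence. Qed.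

Definition deletable (C : ctx) (X : form) : Prop :=
  forall D, provable (fill C (fill D [IF X])) -> provable (fill C (fill D [])).

Lemma deletable_comp C C' X : deletable C X -> deletable (ctx_comp C C') X.
Proof. intros H D. rewrite !fill_ctx_comp, <- !(fill_ctx_comp C'). apply H. Qed.

Lemma dia_deletable C L X : In (IF (Dia X)) L -> deletable (bracket_ctx C L) X.
Proof.
  intros HX D. unfold bracket_ctx. apply in_split in HX as [L1 [L2 ->]].
  assert (HP : forall S, Permutation ((L1 ++ IF (Dia X) :: L2) ++ [IB S])
                                     (((L1 ++ L2) ++ [IB S]) ++ [IF (Dia X)])) by (intro; psolve).
  rewrite !fill_ctx_comp; cbn [fill app].
  intro H. apply (provable_exch _ _ _ (HP _)).
  apply (r_dia C (Under (L1 ++ L2) D)); [cbn; lia|].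
  exact (provable_exch _ _ _ (Permutation_sym (HP _)) H).
Qed.

Lemma provable_id_gen B : forall C L, provable (fill C (L ++ [IF B; IF (neg B)])).
Proof.
  induction B as [a|a|B1 IH1 B2 IH2|B1 IH1 B2 IH2|B IH|B IH]; intros C L; cbn [neg].
  - exch_to (L ++ [IF (Neg a); IF (Pos a)]). apply provable_id_end.
  - apply provable_id_end.
  - exch_to (L ++ [IF (Or (neg B1) (neg B2))] ++ [IF (And B1 B2)]). rewrite fill_app.
    apply provable_and_end; [exch_to ([IF B1] ++ [IF (Or (neg B1) (neg B2))])
                            |exch_to ([IF B2] ++ [IF (Or (neg B1) (neg B2))])];
      apply provable_or_end; [exch_to ([IF (neg B2)] ++ [IF B1; IF (neg B1)])
                             |exch_to ([IF (neg B1)] ++ [IF B2; IF (neg B2)])]; auto.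
  - rewrite fill_app. apply (provable_and_end _ [IF (Or B1 B2)]);
      [exch_to ([IF (neg B1)] ++ [IF (Or B1 B2)]) | exch_to ([IF (neg B2)] ++ [IF (Or B1 B2)])];
      apply provable_or_end; [exch_to ([IF B2] ++ [IF B1; IF (neg B1)])
                             |exch_to ([IF B1] ++ [IF B2; IF (neg B2)])]; auto.
  - exch_to ((L ++ [IF (Dia (neg B))]) ++ [IF (Box B)]). apply provable_box_end.
    rewrite fill_bracket.
    apply (dia_deletable C (L ++ [IF (Dia (neg B))]) (neg B) (in_elt _ _ _)
             (Hole [IF (Dia (neg B)); IF B])).
    apply (IH _ [IF (Dia (neg B))]).
  - exch_to ((L ++ [IF (Dia B)]) ++ [IF (Box (neg B))]). apply provable_box_end.
    rewrite neg_involutive, fill_bracket.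
    apply (dia_deletable C (L ++ [IF (Dia B)]) B (in_elt _ _ _)
             (Hole [IF (Dia B); IF (neg B)])).
    cbn [fill app]. exch_to ([IF (Dia B)] ++ [IF B; IF (neg B)]). apply IH.
Qed.

(** * Saturated sequents *)

(* [covered A S]: the falsity of [A] in the countermodel at [S] is witnessed by
   [S] itself, following the invertible rules for [And], [Or] and [Box]. *)
Fixpoint covered (A : form) (S : sequent) : Prop :=
  In (IF A) S \/
  match A with
  | And B C => covered B S \/ covered C S
  | Or B C => covered B S /\ covered C S
  | Box B => exists D, In (IB D) S /\ covered B D
  | _ => False
  end.

Definition covers (S S' : sequent) : Prop := forall X, covered X S' -> covered X S.

Lemma covered_in A S : In (IF A) S -> covered A S.
Proof. destruct A; cbn; auto. Qed.

Lemma covers_intro S S' :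
  (forall Y, In (IF Y) S' -> covered Y S) ->
  (forall D', In (IB D') S' -> exists D, In (IB D) S /\ covers D D') ->
  covers S S'.
Proof.
  intros HF HB X.
  induction X; intros [HX|HX]; try exact (HF _ HX); cbn in HX |- *; try contradiction.
  - right. destruct HX; auto.
  - right. destruct HX; auto.
  - destruct HX as [D' [HD' HX]]. destruct (HB _ HD') as [D [HD HDD']]. right; eauto.
Qed.

Lemma covers_incl S S' : incl S' S -> covers S S'.
Proof.
  intro HS. apply covers_intro; [intros Y HY; apply covered_in, HS, HY|].
  intros D HD. exists D. split; [apply HS, HD | intros X; auto].
Qed.

Definition dias (S : sequent) : list form :=
  flat_map (fun i => match i with IF (Dia B) => [B] | _ => [] end) S.

Lemma in_dias X S : In X (dias S) <-> In (IF (Dia X)) S.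
Proof.
  unfold dias. rewrite in_flat_map. split.
  - intros [i [HS HX]]. destruct i as [[]|]; cbn in HX; try contradiction.
    destruct HX as [<-|[]]. exact HS.
  - intro H. exists (IF (Dia X)). cbn; auto.
Qed.

(* [H] lists the formulas [X] such that [Dia X] occurs in an ancestor node. *)
Inductive saturated : list form -> sequent -> Prop :=
| saturated_intro H S :
    (forall X, In X H -> covered X S) ->
    (forall p, In (IF (Pos p)) S -> In (IF (Neg p)) S -> False) ->
    (forall A B, In (IF (And A B)) S -> covered A S \/ covered B S) ->
    (forall A B, In (IF (Or A B)) S -> covered A S /\ covered B S) ->
    (forall B, In (IF (Box B)) S -> exists D, In (IB D) S /\ covered B D) ->
    (forall D, In (IB D) S -> saturated (H ++ dias S) D) ->
    saturated H S.

Lemma saturated_reach w v :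
  reach w v -> forall H, saturated H w -> exists H', saturated H' v /\ incl (H ++ dias w) H'.
Proof.
  induction 1 as [w v Hin|w u v Hin _ IH]; intros H HS; inversion HS as [? ? _ _ _ _ _ Hch]; subst.
  - exists (H ++ dias w). split; [apply Hch, Hin | apply incl_refl].
  - destruct (IH _ (Hch _ Hin)) as [H' [HS' Hincl]]. exists H'.
    split; [exact HS' | intros x Hx; apply Hincl, in_or_app; left; exact Hx].
Qed.

Lemma saturated_refutes A : forall H w, saturated H w -> covered A w -> ~ forces w (tr A).
Proof.
  induction A as [a|a|A IHA B IHB|A IHA B IHB|A IHA|A IHA]; intros H w HS Hc;
    inversion HS as [? ? Hhist Hclash HAnd HOr HBox Hch]; subst;
    cbn [covered tr forces MDia MNeg] in *.
  - destruct Hc as [Hc|[]]. intro. eapply Hclash; eauto.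
  - destruct Hc as [Hc|[]]. tauto.
  - destruct Hc as [Hc|Hc]; [apply HAnd in Hc|];
      (intros [HA HB]; destruct Hc as [Hc|Hc]; [eapply IHA|eapply IHB]; eauto).
  - destruct Hc as [Hc|Hc]; [apply HOr in Hc|];
      (intros [HA|HB]; destruct Hc as [HcA HcB]; [eapply IHA|eapply IHB]; eauto).
  - assert (Hc' : exists D, In (IB D) w /\ covered A D)
      by (destruct Hc as [Hc|Hc]; [apply HBox in Hc|]; auto).
    destruct Hc' as [D [HD HcD]]. intro Hb.
    apply (IHA _ _ (Hch _ HD) HcD), Hb. constructor; auto.
  - destruct Hc as [Hc|[]]. intro Hd. apply Hd. intros v Hv Hs.
    destruct (saturated_reach _ _ Hv _ HS) as [H' [HS' Hincl]].
    apply (IHA _ _ HS'); [|exact Hs].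
    inversion HS' as [? ? Hhist' _ _ _ _ _]; subst.
    apply Hhist', Hincl, in_or_app; right. apply in_dias, Hc.
Qed.

(** * Backward proof search *)

Lemma In_map_IF A F : In (IF A) (map IF F) <-> In A F.
Proof.
  rewrite in_map_iff. split; [intros [x [E H]]; injection E as ->; exact H | intro H; eauto].
Qed.

Lemma not_In_IB_map_IF D F : ~ In (IB D) (map IF F).
Proof. rewrite in_map_iff. intros [x [E _]]; discriminate. Qed.

Lemma In_IF_node A F Ds : In (IF A) (map IF F ++ map IB Ds) <-> In A F.
Proof.
  rewrite in_app_iff, In_map_IF, (in_map_iff IB).
  split; [intros [H|[x [E _]]]; [exact H | discriminate] | auto].
Qed.

Lemma In_IB_node D F Ds : In (IB D) (map IF F ++ map IB Ds) <-> In D Ds.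
Proof.
  rewrite in_app_iff, (in_map_iff IB).
  split; [intros [H|[x [E H]]]; [now apply not_In_IB_map_IF in H | now injection E as ->] | eauto].
Qed.

Lemma in_last (a : form) F1 F2 : In a (F1 ++ F2 ++ [a]).
Proof. rewrite app_assoc. apply in_elt. Qed.

Lemma dias_node F Ds : dias (map IF F ++ map IB Ds) = dias (map IF F).
Proof.
  unfold dias. rewrite flat_map_app. induction Ds; cbn; [apply app_nil_r | exact IHDs].
Qed.

Lemma dias_incl S S' : incl S S' -> incl (dias S) (dias S').
Proof. intros H X. rewrite !in_dias. apply H. Qed.

Lemma list_witnesses {X Y} (P : Y -> Prop) (R : X -> Y -> Prop) (l : list X) :
  (forall x, In x l -> exists y, P y /\ R x y) ->
  exists l', (forall y, In y l' -> P y) /\ (forall x, In x l -> exists y, In y l' /\ R x y).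
Proof.
  induction l as [|x l IH]; intro H; [exists []; split; intros ? []|].
  destruct (H x (or_introl eq_refl)) as [y [Hy Rxy]].
  destruct IH as [l' [HP HR]]; [intros; apply H; right; assumption|].
  exists (y :: l'). split; [intros z [<-|Hz]; auto|].
  intros z [<-|Hz]; [exists y; cbn; auto|]. destruct (HR z Hz) as [u [Hu Ru]]. exists u; cbn; auto.
Qed.

Fixpoint count (P : form -> Prop) (l : list form) : nat :=
  match l with
  | [] => 0
  | x :: l => (if excluded_middle_informative (P x) then 1 else 0) + count P l
  end.

Lemma count_le P l : count P l <= length l.
Proof. induction l as [|x l IH]; cbn; [|destruct excluded_middle_informative]; lia. Qed.

Lemma count_mono P Q l : (forall x, P x -> Q x) -> count P l <= count Q l.
Proof.
  intro H. induction l as [|x l IH]; cbn; [lia|].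
  destruct (excluded_middle_informative (P x)), (excluded_middle_informative (Q x)); try lia.
  exfalso; auto.
Qed.

Lemma count_lt P Q l a :
  (forall x, P x -> Q x) -> In a l -> Q a -> ~ P a -> count P l < count Q l.
Proof.
  intros H Ha HQ HP. induction l as [|x l IH]; cbn; [contradiction|].
  pose proof (count_mono P Q l H).
  destruct (excluded_middle_informative (P x)), (excluded_middle_informative (Q x));
    destruct Ha as [->|Ha]; try contradiction; try (specialize (IH Ha)); try lia; exfalso; auto.
Qed.

Fixpoint boxes (F : list form) : list form :=
  match F with
  | [] => []
  | Box B :: F => B :: boxes F
  | _ :: F => boxes F
  end.

Lemma in_boxes B F : In B (boxes F) <-> In (Box B) F.
Proof.
  induction F as [|[] F IH]; cbn; rewrite ?IH; intuition congruence.
Qed.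

Definition box_bracket (B : form) : list form := [Dia (neg B); B].

Lemma box_bracket_provable C B : deletable C (neg B) -> provable (fill C (map IF (box_bracket B))).
Proof.
  intro H. rewrite <- (app_nil_r (map IF (box_bracket B))).
  apply (H (Hole (map IF (box_bracket B)))), (provable_id_gen B C [IF (Dia (neg B))]).
Qed.

Lemma box_child_open C L1 L2 B :
  ~ provable (fill C (map IF (L1 ++ Box B :: L2))) ->
  ~ provable (fill (bracket_ctx C (map IF (L1 ++ L2))) (map IF (box_bracket B))).
Proof.
  intros Hn Hp. apply Hn. rewrite !map_app; cbn [map].
  exch_to (map IF L1 ++ map IF L2 ++ [IF (Box B)]). rewrite app_assoc.
  apply provable_box_end. rewrite fill_bracket, <- map_app. exact Hp.
Qed.

Lemma box_child_deletable C H L1 L2 B X :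
  (forall X, In X H -> deletable C X) ->
  In X (H ++ dias (map IF (L1 ++ Box B :: L2))) ->
  deletable (bracket_ctx C (map IF (L1 ++ L2))) X.
Proof.
  intros Hdel HX. apply in_app_or in HX as [HX|HX]; [apply deletable_comp, Hdel, HX|].
  apply dia_deletable. apply in_dias, In_map_IF in HX. apply In_map_IF.
  apply in_app_or in HX as [HX|[E|HX]]; [| discriminate |]; apply in_or_app; auto.
Qed.

Lemma clash_provable C F p : In (Pos p) F -> In (Neg p) F -> provable (fill C (map IF F)).
Proof.
  intros HP HN. apply in_split in HP as [F1 [F2 ->]].
  assert (HN' : In (Neg p) (F1 ++ F2))
    by (apply in_app_or in HN as [|[|]]; [| discriminate |]; apply in_or_app; auto).
  apply in_split in HN' as [G1 [G2 EG]].
  apply (provable_exch _ _ (map IF ((G1 ++ G2) ++ [Neg p; Pos p])));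
    [|rewrite map_app; apply provable_id_end].
  apply Permutation_map. rewrite <- Permutation_middle, EG. psolve.
Qed.

Definition prop_saturated (H F : list form) : Prop :=
  (forall X, In X H -> covered X (map IF F)) /\
  (forall A B, In (And A B) F -> covered A (map IF F) \/ covered B (map IF F)) /\
  (forall A B, In (Or A B) F -> covered A (map IF F) /\ covered B (map IF F)).

Lemma saturated_node H F Ds :
  prop_saturated H F ->
  (forall p, In (Pos p) F -> In (Neg p) F -> False) ->
  (forall D, In D Ds -> saturated (H ++ dias (map IF F)) D) ->
  (forall B, In (Box B) F -> exists D, In D Ds /\ covers D (map IF (box_bracket B))) ->
  saturated H (map IF F ++ map IB Ds).
Proof.
  intros [Hhist [HAnd HOr]] Hclash HDs HBox.
  assert (Hcov : covers (map IF F ++ map IB Ds) (map IF F))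
    by (apply covers_incl, incl_appl, incl_refl).
  constructor.
  - intros X HX. apply Hcov, Hhist, HX.
  - intros p. rewrite !In_IF_node. apply Hclash.
  - intros A B HAB. apply In_IF_node, HAnd in HAB as [HA|HB]; [left|right]; apply Hcov; assumption.
  - intros A B HAB. apply In_IF_node, HOr in HAB as [HA HB]. split; apply Hcov; assumption.
  - intros B HB. apply In_IF_node, HBox in HB as [D [HD HBD]].
    exists D. split; [apply In_IB_node, HD | apply HBD, covered_in; cbn; auto].
  - intros D HD. apply In_IB_node in HD. rewrite dias_node. apply HDs, HD.
Qed.

Definition subformula_closed (U : list form) : Prop :=
  forall A, In A U ->
  match A with
  | And B C | Or B C => In B U /\ In C U
  | Box B => In B U /\ In (Dia (neg B)) U
  | Dia B => In B U
  | _ => True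
  end.

Section Search.

Variable U : list form.
Hypothesis HU : subformula_closed U.

Definition refines (C : ctx) (F F' : list form) : Prop :=
  ~ provable (fill C (map IF F')) /\ incl F' U /\
  covers (map IF F') (map IF F) /\ incl (dias (map IF F)) (dias (map IF F')).

Lemma refines_refl C F : ~ provable (fill C (map IF F)) -> incl F U -> refines C F F.
Proof.
  intros Hn HF. split; [exact Hn|]. split; [exact HF|]. split; [intros X; auto | apply incl_refl].
Qed.

Lemma refines_trans C F F' F'' : refines C F F' -> refines C F' F'' -> refines C F F''.
Proof.
  intros [_ [_ [Hc1 Hd1]]] [Hn [HF [Hc2 Hd2]]].
  split; [exact Hn|]. split; [exact HF|]. split; [intros X HX; auto | eapply incl_tran; eauto].
Qed.

Lemma refines_replace C F1 Y F2 R :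
  incl (F1 ++ Y :: F2) U -> incl R U -> (forall X, Y <> Dia X) ->
  covered Y (map IF (F1 ++ F2 ++ R)) -> ~ provable (fill C (map IF (F1 ++ F2 ++ R))) ->
  refines C (F1 ++ Y :: F2) (F1 ++ F2 ++ R).
Proof.
  intros HF HR HY HcY Hn. repeat split; [exact Hn | | |].
  - intros Z HZ. apply in_app_or in HZ as [HZ|HZ]; [apply HF, in_or_app; auto|].
    apply in_app_or in HZ as [HZ|HZ]; [apply HF, in_or_app; right; right; exact HZ | apply HR, HZ].
  - apply covers_intro; [|intros D HD; now apply not_In_IB_map_IF in HD].
    intros Z HZ. apply In_map_IF, in_app_or in HZ as [HZ|[<-|HZ]]; [| exact HcY |];
      apply covered_in, In_map_IF; apply in_or_app; [left | right; apply in_or_app; left]; exact HZ.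
  - intros X HX. apply in_dias, In_map_IF in HX. apply in_dias, In_map_IF.
    apply in_app_or in HX as [HX|[E|HX]]; [apply in_or_app; auto | now destruct (HY X) |].
    apply in_or_app; right; apply in_or_app; auto.
Qed.

Definition progresses (F F' : list form) : Prop :=
  exists a, In a F' /\ In a U /\ ~ covered a (map IF F).

Section PropSaturation.

Variables (C : ctx) (H : list form).
Hypothesis HH : incl H U.
Hypothesis Hdel : forall X, In X H -> deletable C X.

Lemma step_history F X :
  incl F U -> ~ provable (fill C (map IF F)) -> In X H -> ~ covered X (map IF F) ->
  refines C F (F ++ [X]) /\ progresses F (F ++ [X]).
Proof.
  intros HF Hn HX HcX.
  assert (Hincl : incl (map IF F) (map IF (F ++ [X])))
    by (rewrite map_app; apply incl_appl, incl_refl).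
  repeat split.
  - intro Hp. apply Hn. rewrite <- (app_nil_r (map IF F)).
    apply (Hdel X HX (Hole (map IF F))). rewrite map_app in Hp. exact Hp.
  - apply incl_app; [exact HF | intros Y [<-|[]]; apply HH, HX].
  - apply covers_incl, Hincl.
  - apply dias_incl, Hincl.
  - exists X. repeat split; [apply in_or_app; cbn; auto | apply HH, HX | exact HcX].
Qed.

Lemma step_and F A B :
  incl F U -> ~ provable (fill C (map IF F)) -> In (And A B) F ->
  ~ covered A (map IF F) -> ~ covered B (map IF F) ->
  exists F', refines C F F' /\ progresses F F'.
Proof.
  intros HF Hn HAB HcA HcB. pose proof (HU _ (HF _ HAB)) as [HA HB].
  apply in_split in HAB as [F1 [F2 ->]].
  assert (Hor : ~ provable (fill C (map IF (F1 ++ F2 ++ [A]))) \/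
                ~ provable (fill C (map IF (F1 ++ F2 ++ [B])))).
  { apply not_and_or. intros [HpA HpB]. apply Hn. rewrite !map_app in HpA. rewrite !map_app in HpB.
    rewrite !map_app; cbn [map] in *.
    exch_to ((map IF F1 ++ map IF F2) ++ [IF (And A B)]).
    apply provable_and_end; [exch_to (map IF F1 ++ map IF F2 ++ [IF A])
                            |exch_to (map IF F1 ++ map IF F2 ++ [IF B])]; assumption. }
  destruct Hor as [Hn'|Hn']; [exists (F1 ++ F2 ++ [A]) | exists (F1 ++ F2 ++ [B])];
    (split; [apply refines_replace;
             [exact HF | intros Y [<-|[]]; assumption | discriminate | | exact Hn']|]).
  - right; left. apply covered_in, In_map_IF, in_last.
  - exists A. split; [apply in_last | split; assumption].
  - right; right. apply covered_in, In_map_IF, in_last.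
  - exists B. split; [apply in_last | split; assumption].
Qed.

Lemma step_or F A B :
  incl F U -> ~ provable (fill C (map IF F)) -> In (Or A B) F ->
  ~ (covered A (map IF F) /\ covered B (map IF F)) ->
  exists F', refines C F F' /\ progresses F F'.
Proof.
  intros HF Hn HAB HcAB. pose proof (HU _ (HF _ HAB)) as [HA HB].
  apply in_split in HAB as [F1 [F2 ->]].
  assert (HAB : forall a, In a [A; B] -> In a (F1 ++ F2 ++ [A; B]))
    by (intros a Ha; apply in_or_app; right; apply in_or_app; right; exact Ha).
  exists (F1 ++ F2 ++ [A; B]). split.
  - apply refines_replace; [exact HF | intros Y [<-|[<-|[]]]; assumption | discriminate | |].
    + right. split; apply covered_in, In_map_IF, HAB; cbn; auto.
    + intro Hp. apply Hn. rewrite !map_app in Hp; rewrite !map_app; cbn [map] in *.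
      exch_to ((map IF F1 ++ map IF F2) ++ [IF (Or A B)]).
      apply provable_or_end. exch_to (map IF F1 ++ map IF F2 ++ [IF A; IF B]). exact Hp.
  - apply not_and_or in HcAB as [Hc|Hc]; [exists A | exists B];
      (split; [apply HAB; cbn; auto | split; assumption]).
Qed.

Lemma prop_step F :
  incl F U -> ~ provable (fill C (map IF F)) -> ~ prop_saturated H F ->
  exists F', refines C F F' /\ progresses F F'.
Proof.
  intros HF Hn Hns.
  destruct (classic (exists X, In X H /\ ~ covered X (map IF F))) as [[X [HX HcX]]|N1].
  { exists (F ++ [X]). apply step_history; assumption. }
  destruct (classic (exists A B, In (And A B) F /\
                                ~ covered A (map IF F) /\ ~ covered B (map IF F)))
    as [[A [B [HAB [HcA HcB]]]]|N2]; [eapply step_and; eassumption|].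
  destruct (classic (exists A B, In (Or A B) F /\ ~ (covered A (map IF F) /\ covered B (map IF F))))
    as [[A [B [HAB HcAB]]]|N3]; [eapply step_or; eassumption|].
  exfalso. apply Hns. split; [|split].
  - intros X HX. apply NNPP. eauto.
  - intros A B HAB. apply NNPP. intros Hc. apply N2. exists A, B. tauto.
  - intros A B HAB. apply NNPP. intros Hc. apply N3. exists A, B. tauto.
Qed.

Lemma prop_saturate F :
  incl F U -> ~ provable (fill C (map IF F)) ->
  exists F', refines C F F' /\ prop_saturated H F'.
Proof.
  remember (length U - count (fun a => covered a (map IF F)) U) as m eqn:Em. revert F Em.
  induction m as [m IH] using lt_wf_ind; intros F Em HF Hn.
  destruct (classic (prop_saturated H F)) as [Hs|Hns]; [exists F; auto using refines_refl|].
  destruct (prop_step F HF Hn Hns) as [F' [Href [a [Ha [HaU Hca]]]]].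
  pose proof Href as [Hn' [HF' [Hcov _]]].
  assert (Hlt : count (fun a => covered a (map IF F)) U < count (fun a => covered a (map IF F')) U)
    by (apply (count_lt _ _ _ a); [intros x Hx; apply Hcov, Hx | exact HaU
                                  | apply covered_in, In_map_IF, Ha | exact Hca]).
  pose proof (count_le (fun a => covered a (map IF F')) U).
  destruct (IH (length U - count (fun a => covered a (map IF F')) U) ltac:(lia) F' eq_refl HF' Hn')
    as [F'' [Href' Hs]].
  exists F''. split; [eapply refines_trans; eassumption | exact Hs].
Qed.

End PropSaturation.

(* The number of [Box B] in [U] with [neg B] in the history [L].  It grows along every
   branch of the search, because a box whose [neg B] is already in the history is
   closed by [box_bracket_provable]. *)
Definition blocked_count (L : list form) : nat := count (fun B => In (neg B) L) (boxes U).

Lemma blocked_measure_lt L L1 B :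
  incl L L1 -> In (Box B) U -> ~ In (neg B) L1 ->
  length (boxes U) - blocked_count (L1 ++ dias (map IF (box_bracket B)))
  < length (boxes U) - blocked_count L.
Proof.
  intros HL HB Hn.
  assert (Hmono : blocked_count L <= blocked_count L1) by (apply count_mono; auto).
  assert (Hlt : blocked_count L1 < blocked_count (L1 ++ dias (map IF (box_bracket B)))).
  { apply (count_lt _ _ _ B);
      [intros x Hx; apply in_or_app; auto | apply in_boxes, HB | | exact Hn].
    apply in_or_app; right. apply in_dias; cbn; auto. }
  pose proof (count_le (fun x => In (neg x) (L1 ++ dias (map IF (box_bracket B)))) (boxes U)).
  unfold blocked_count in *; lia.
Qed.

Lemma dias_in_U F : incl F U -> incl (dias (map IF F)) U.
Proof. intros HF X HX. apply in_dias, In_map_IF, HF, HU in HX. exact HX. Qed.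

Theorem search : forall F H C,
  incl F U -> incl H U -> (forall X, In X H -> deletable C X) ->
  ~ provable (fill C (map IF F)) ->
  exists S, saturated H S /\ covers S (map IF F).
Proof.
  intros F H C. remember (length (boxes U) - blocked_count (H ++ dias (map IF F))) as m eqn:Em.
  revert F H C Em. induction m as [m IH] using lt_wf_ind.
  intros F H C Em HF HH Hdel Hn.
  destruct (prop_saturate C H HH Hdel F HF Hn) as [F1 [[Hn1 [HF1 [Hcov1 Hdias1]]] Hsat1]].
  set (H1 := H ++ dias (map IF F1)).
  assert (Hchild : forall B, In B (boxes F1) ->
                   exists D, saturated H1 D /\ covers D (map IF (box_bracket B))).
  { intros B HB. apply in_boxes, in_split in HB as [L1 [L2 EF1]].
    set (C' := bracket_ctx C (map IF (L1 ++ L2))).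
    assert (HBU : In (Box B) U) by (apply HF1; rewrite EF1; apply in_elt).
    assert (Hopen : ~ provable (fill C' (map IF (box_bracket B))))
      by (apply box_child_open; rewrite <- EF1; exact Hn1).
    assert (Hdel' : forall X, In X H1 -> deletable C' X)
      by (intros X HX; apply (box_child_deletable C H L1 L2 B X Hdel); rewrite <- EF1; exact HX).
    assert (Hfresh : ~ In (neg B) H1) by (intro HnB; apply Hopen, box_bracket_provable, Hdel', HnB).
    assert (Hlt := blocked_measure_lt (H ++ dias (map IF F)) H1 B
                     (incl_app_app (incl_refl H) Hdias1) HBU Hfresh).
    rewrite <- Em in Hlt.
    apply (IH _ Hlt (box_bracket B) H1 C' eq_refl); [| | exact Hdel' | exact Hopen].
    - pose proof (HU _ HBU) as [HB HDB]. intros X [<-|[<-|[]]]; assumption.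
    - apply incl_app; [exact HH | apply dias_in_U, HF1]. }
  destruct (list_witnesses _ _ _ Hchild) as [Ds [HDs HBs]].
  exists (map IF F1 ++ map IB Ds). split.
  - apply saturated_node; [exact Hsat1 | | exact HDs |].
    + intros p HP HN. exact (Hn1 (clash_provable C F1 p HP HN)).
    + intros B HB. apply HBs, in_boxes, HB.
  - intros X HX. apply covers_incl with (S' := map IF F1);
      [apply incl_appl, incl_refl | apply Hcov1, HX].
Qed.

End Search.

(** * Completeness *)

Fixpoint subformulas (A : form) : list form :=
  A :: match A with
       | And B C | Or B C => subformulas B ++ subformulas C
       | Box B | Dia B => subformulas B
       | _ => []
       end.

Lemma subformulas_refl A : In A (subformulas A).
Proof. destruct A; cbn; auto. Qed.

Lemma subformulas_trans A X Y :
  In X (subformulas A) -> In Y (subformulas X) -> In Y (subformulas A).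
Proof.
  induction A; cbn; intros [<-|HX] HY; auto; try contradiction; right;
    try (apply in_app_or in HX as [HX|HX]; apply in_or_app; [left|right]); eauto.
Qed.

Lemma subformula_closed_subformulas A0 :
  subformula_closed (subformulas A0 ++ map neg (subformulas A0)).
Proof.
  set (U := subformulas A0 ++ map neg (subformulas A0)).
  assert (HS : forall X, In X (subformulas A0) ->
               forall Y, In Y (subformulas X) -> In Y U /\ In (neg Y) U).
  { intros X HX Y HY. pose proof (subformulas_trans _ _ _ HX HY).
    split; apply in_or_app; [left; assumption | right; apply in_map; assumption]. }
  intros X HX. apply in_app_or in HX as [HX|HX].
  - pose proof (HS _ HX) as HSX. destruct X; cbn in HSX |- *; auto.
    1, 2: split; apply HSX; right; apply in_or_app; [left|right]; apply subformulas_refl.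
    + split; [apply HSX; right; apply subformulas_refl | apply (HSX (Box X)); left; reflexivity].
    + apply HSX; right; apply subformulas_refl.
  - apply in_map_iff in HX as [Z [<- HZ]]. pose proof (HS _ HZ) as HSZ.
    destruct Z; cbn in HSZ |- *; auto.
    1, 2: split; apply HSZ; right; apply in_or_app; [left|right]; apply subformulas_refl.
    + apply HSZ; right; apply subformulas_refl.
    + rewrite neg_involutive.
      split; [apply HSZ; right; apply subformulas_refl | apply (HSZ (Dia Z)); left; reflexivity].
Qed.

Theorem provable_complete A : GLthm (tr A) -> provable [IF A].
Proof.
  intro HA. apply NNPP. intro Hn.
  destruct (search _ (subformula_closed_subformulas A) [A] [] (Hole [])) as [S [HS Hcov]].
  - intros X [<-|[]]. apply in_or_app; left; apply subformulas_refl.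
  - intros X [].
  - intros X [].
  - exact Hn.
  - apply (saturated_refutes A [] S HS);
      [apply Hcov, covered_in; left; reflexivity | apply GL_valid, HA].
Qed.

Theorem mainTheorem1 : forall A : form, GLthm (tr A) <-> provable [IF A].
Proof.
  intro A. split; [apply provable_complete|].
  intro HA. eapply GL_mp_taut; [apply provable_sound, HA | taut].
Qed.
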